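(* Let $F:\mathcal{P}(V,A)\to S_2(A)$ be a weakly viable, reducible consular election rule satisfying SPP and SPO. Then $F$ is Marian if and only if its range graph $\mathcal{G}(F)$ is acyclic.
   Context: $V$ is a finite nonempty set of voters, $A$ a finite set of alternatives; a profile $P$ assigns to each voter $i$ a linear order $P_i$ on $A$; $P_i'P_{-i}$ replaces voter $i$'s order by $P_i'$; $P|_B$ is the profile of restrictions to $B\subseteq A$. $S_2(A)$ is the set of 2-element subsets of $A$; a consular election rule is a map $F:\mathcal{P}(V,A)\to S_2(A)$. SPO: for all $P$, $i$, $P_i'$, $\mathrm{best}(P_i,F(P))\succeq_i\mathrm{best}(P_i,F(P_i'P_{-i}))$; SPP: same with $\mathrm{worst}$, where $\mathrm{best}(P_i,W)$, $\mathrm{worst}(P_i,W)$ are the $P_i$-best and $P_i$-worst elements of $W$. Weakly viable: every $a\in A$ lies in $F(P)$ for some $P$. $F$ is reducible if there is a partition $A=B\uplus C$ and social choice functions $G:\mathcal{P}(V,B)\to B$, $H:\mathcal{P}(V,C)\to C$ with $F(P)=\{G(P|_B),H(P|_C)\}$ for all $P$. $F$ is Marian if some $m\in A$ lies in $F(P)$ for every profile $P$. The range graph $\mathcal{G}(F)$ has vertex set $A$ and edge set equal to the range of $F$. *)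

From mathcomp Require Import all_boot.
Set Implicit Arguments. Unset Strict Implicit. Unset Printing Implicit Defensive.

(* A (strict) linear order on a finite type T, as a boolean relation:
   R x y means "x is strictly preferred to y". *)
Definition linear_order (T : finType) (R : rel T) : Prop :=
  irreflexive R /\ transitive R /\ (forall x y, x != y -> R x y || R y x).

Definition profile (V T : finType) (P : V -> rel T) : Prop :=
  forall i, linear_order (P i).

Definition update (V T : finType) (P : V -> rel T) (i : V) (Ri : rel T)
  : V -> rel T := fun j => if j == i then Ri else P j.

Definition subalt (A : finType) (B : {set A}) : finType := {x : A | x \in B}.

Definition restrict (V A : finType) (B : {set A}) (P : V -> rel A)
  : V -> rel (subalt B) := fun i x y => P i (val x) (val y).

Arguments restrict {V A} B P _ _ _.

Definition weakpref (T : finType) (R : rel T) (x y : T) : bool :=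
  (x == y) || R x y.

Definition is_best (T : finType) (R : rel T) (W : {set T}) (x : T) : Prop :=
  x \in W /\ forall y, y \in W -> weakpref R x y.
Definition is_worst (T : finType) (R : rel T) (W : {set T}) (x : T) : Prop :=
  x \in W /\ forall y, y \in W -> weakpref R y x.

Definition consular (V A : finType) (F : (V -> rel A) -> {set A}) : Prop :=
  forall P, profile P -> #|F P| = 2.

Definition SPO (V A : finType) (F : (V -> rel A) -> {set A}) : Prop :=
  forall P i Ri, profile P -> linear_order Ri ->
    forall x y, is_best (P i) (F P) x -> is_best (P i) (F (update P i Ri)) y ->
      weakpref (P i) x y.

Definition SPP (V A : finType) (F : (V -> rel A) -> {set A}) : Prop :=
  forall P i Ri, profile P -> linear_order Ri ->
    forall x y, is_worst (P i) (F P) x -> is_worst (P i) (F (update P i Ri)) y ->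
      weakpref (P i) x y.

Definition weakly_viable (V A : finType) (F : (V -> rel A) -> {set A}) : Prop :=
  forall a, exists P, profile P /\ a \in F P.

Definition reducible (V A : finType) (F : (V -> rel A) -> {set A}) : Prop :=
  exists (B C : {set A}),
    [/\ [disjoint B & C], B :|: C = setT &
    exists (G : (V -> rel (subalt B)) -> subalt B)
           (H : (V -> rel (subalt C)) -> subalt C),
      forall P, profile P ->
        F P = [set val (G (restrict B P)); val (H (restrict C P))]].

Definition marian (V A : finType) (F : (V -> rel A) -> {set A}) : Prop :=
  exists m, forall P, profile P -> m \in F P.

Definition range_edge (V A : finType) (F : (V -> rel A) -> {set A}) (x y : A)
  : Prop := exists P, profile P /\ F P = [set x; y].

(* A cycle: a sequence of at least 3 pairwise distinct vertices, consecutive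
   ones (cyclically) adjacent. *)
Definition has_cycle (V A : finType) (F : (V -> rel A) -> {set A}) : Prop :=
  exists (x : A) (t : seq A),
    [/\ uniq (x :: t), 2 <= size t &
      forall k, k < size (x :: t) ->
        range_edge F (nth x (x :: t) k) (nth x (x :: t) (k.+1 %% size (x :: t)))].

Definition acyclic_range (V A : finType) (F : (V -> rel A) -> {set A}) : Prop :=
  ~ has_cycle F.

From mathcomp Require Import all_boot zify.
From Stdlib Require Import FunctionalExtensionality.
Set Implicit Arguments. Unset Strict Implicit.

(* If F P = {G(P|B), H(P|C)}, weak viability lets G and H reach every b in B
   and every c in C; splicing the two witnessing profiles (B on top) shows that
   every pair {b, c} is in the range of F.  Hence when |B|, |C| >= 2 the range
   graph contains a 4-cycle b1 c1 b2 c2, while otherwise the unique element of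
   a singleton part lies in every F P.  Conversely, a vertex lying on every
   edge of the range graph misses some edge of any cycle. *)

Lemma modn_succ j n : j < n -> j.+1 %% n = (if j.+1 == n then 0 else j.+1).
Proof. by move=> jn; case: eqP => [->|?]; [rewrite modnn | rewrite modn_small //; lia]. Qed.

Lemma succ_modn_neq j n : j < n -> 1 < n -> j.+1 %% n != j.
Proof. by move=> jn n1; rewrite modn_succ //; case: (j.+1 =P n) => ?; lia. Qed.

Lemma succ2_modn_neq j n : j < n -> 2 < n -> (j.+1 %% n).+1 %% n != j.
Proof.
move=> jn n2; rewrite (modn_succ jn); case: (j.+1 =P n) => ?;
  rewrite modn_succ; try case: (_ =P n) => ?; lia.
Qed.

Lemma cycle_step_avoid (T : eqType) (x0 m : T) (s : seq T) :
  uniq s -> 2 < size s ->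
  exists2 k, k < size s & (nth x0 s k != m) && (nth x0 s (k.+1 %% size s) != m).
Proof.
move=> us s3; have s0 : 0 < size s by lia.
have [ms | /memPn nms] := boolP (m \in s); last first.
  by exists 0 => //; rewrite !nms ?mem_nth ?ltn_pmod.
have js : index m s < size s by rewrite index_mem.
exists ((index m s).+1 %% size s); first by rewrite ltn_pmod.
rewrite -{2 4}(nth_index x0 ms) !nth_uniq ?ltn_pmod //.
by rewrite succ_modn_neq ?succ2_modn_neq //; lia.
Qed.

Section RangeGraph.
Variables (V A : finType) (F : (V -> rel A) -> {set A}).

Lemma range_edge_sym x y : range_edge F x y -> range_edge F y x.
Proof. by move=> [P [pP FP]]; exists P; split=> //; rewrite FP setUC. Qed.

Lemma marian_acyclic : marian F -> acyclic_range F.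
Proof.
move=> [m mF] [x [t [ut t2 edge]]].
have [k ks /andP[km k'm]] := cycle_step_avoid x m ut (t2 : 2 < size (x :: t)).
have [P [pP FP]] := edge k ks.
by move: (mF P pP); rewrite FP !inE !(eq_sym m) (negbTE km) (negbTE k'm).
Qed.

Lemma square_has_cycle x y z w :
  uniq [:: x; y; z; w] ->
  range_edge F x y -> range_edge F y z -> range_edge F z w -> range_edge F w x ->
  has_cycle F.
Proof.
move=> u xy yz zw wx; exists x, [:: y; z; w]; split=> //.
by case=> [|[|[|[|k]]]].
Qed.

End RangeGraph.

Section Splice.
Variables (V A : finType) (B : {set A}) (P1 P2 : V -> rel A).

(* Every voter ranks B above its complement, following P1 inside B and P2
   outside. *)
Definition splice : V -> rel A := fun i x y =>
  match x \in B, y \in B with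
  | true, true => P1 i x y
  | false, false => P2 i x y
  | bx, _ => bx
  end.

Lemma profile_splice : profile P1 -> profile P2 -> profile splice.
Proof.
move=> pP1 pP2 i; have [irr1 [tr1 tot1]] := pP1 i; have [irr2 [tr2 tot2]] := pP2 i.
split; [|split] => [x|y x z|x y xy]; rewrite /splice.
- by case: (x \in B); [exact: irr1 | exact: irr2].
- by case: (x \in B); case: (y \in B); case: (z \in B) => //; [exact: tr1 | exact: tr2].
- by case: (x \in B); case: (y \in B) => //; [exact: tot1 | exact: tot2].
Qed.

Lemma restrict_splice_in : restrict B splice = restrict B P1.
Proof.
apply: functional_extensionality => i; apply: functional_extensionality => x.
apply: functional_extensionality => y.
by rewrite /restrict /splice (valP x) (valP y).
Qed.

Lemma restrict_splice_out (C : {set A}) :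
  [disjoint B & C] -> restrict C splice = restrict C P2.
Proof.
move=> dBC; apply: functional_extensionality => i; apply: functional_extensionality => x.
apply: functional_extensionality => y.
by rewrite /restrict /splice (disjointFl dBC (valP x)) (disjointFl dBC (valP y)).
Qed.

End Splice.

Definition reduces_to (V A : finType) (F : (V -> rel A) -> {set A})
    (B C : {set A}) (G : (V -> rel (subalt B)) -> subalt B)
    (H : (V -> rel (subalt C)) -> subalt C) : Prop :=
  [disjoint B & C] /\
  forall P, profile P -> F P = [set val (G (restrict B P)); val (H (restrict C P))].

Arguments reduces_to {V A} F B C G H.

Lemma reducible_reduces_to (V A : finType) (F : (V -> rel A) -> {set A}) :
  reducible F -> exists B C G H, reduces_to F B C G H.
Proof. by move=> [B [C [dBC _ [G [H FP]]]]]; exists B, C, G, H. Qed.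

Section Reduction.
Variables (V A : finType) (F : (V -> rel A) -> {set A}) (B C : {set A}).
Variables (G : (V -> rel (subalt B)) -> subalt B) (H : (V -> rel (subalt C)) -> subalt C).
Hypothesis FBC : reduces_to F B C G H.

Lemma reduces_to_sym : reduces_to F C B H G.
Proof.
have [dBC FP] := FBC; split; first by rewrite disjoint_sym.
by move=> P pP; rewrite FP // setUC.
Qed.

Lemma reduces_to_viable b :
  weakly_viable F -> b \in B -> exists2 P, profile P & val (G (restrict B P)) = b.
Proof.
have [dBC FP] := FBC; move=> wv bB; have [P [pP bF]] := wv b.
exists P => //; move: bF; rewrite FP // !inE => /orP[/eqP // | /eqP bH].
by move: (valP (H (restrict C P))); rewrite -bH (disjointFr dBC bB).
Qed.

Lemma reduces_to_marian : #|B| <= 1 -> marian F.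
Proof.
have [_ FP] := FBC; move=> /card_le1P Bsmall.
set b := val (G (fun _ _ _ => false)); exists b => P pP.
have := Bsmall b (valP _) (val (G (restrict B P))).
by rewrite (valP (G _)) inE => /esym/eqP <-; rewrite FP // set21.
Qed.

End Reduction.

Lemma reduces_to_range_edge (V A : finType) (F : (V -> rel A) -> {set A}) B C G H b c :
  reduces_to F B C G H -> weakly_viable F -> b \in B -> c \in C ->
  range_edge F b c.
Proof.
move=> FBC wv bB cC; have [dBC FP] := FBC.
have [P1 pP1 <-] := reduces_to_viable FBC wv bB.
have [P2 pP2 <-] := reduces_to_viable (reduces_to_sym FBC) wv cC.
exists (splice B P1 P2); split; first exact: profile_splice.
rewrite FP; last exact: profile_splice.
by rewrite (restrict_splice_in B) (restrict_splice_out _ _ dBC).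
Qed.

Lemma reduces_to_has_cycle (V A : finType) (F : (V -> rel A) -> {set A}) B C G H :
  reduces_to F B C G H -> weakly_viable F -> 1 < #|B| -> 1 < #|C| ->
  has_cycle F.
Proof.
move=> FBC wv /card_gt1P[b1 [b2 [b1B b2B b12]]] /card_gt1P[c1 [c2 [c1C c2C c12]]].
have [dBC _] := FBC; have edge := reduces_to_range_edge FBC wv.
have neqBC b c : b \in B -> c \in C -> b != c.
  by move=> bB cC; apply: contraTneq cC => <-; rewrite (disjointFr dBC bB).
apply: (@square_has_cycle _ _ _ b1 c1 b2 c2).
- by rewrite /= !inE !negb_or b12 c12 (eq_sym c1) !neqBC.
- exact: edge b1B c1C.
- exact: range_edge_sym (edge _ _ b2B c1C).
- exact: edge b2B c2C.
- exact: range_edge_sym (edge _ _ b1B c2C).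
Qed.

Theorem corollary30 (V A : finType) (F : (V -> rel A) -> {set A}) :
  0 < #|V| ->
  consular F -> weakly_viable F -> reducible F -> SPP F -> SPO F ->
  (marian F <-> acyclic_range F).
Proof.
move=> _ _ wv /reducible_reduces_to[B [C [G [H FBC]]]] _ _.
split; first exact: marian_acyclic.
move=> acyclic; have [Bsmall | Bbig] := leqP #|B| 1.
  exact: reduces_to_marian FBC Bsmall.
have [Csmall | Cbig] := leqP #|C| 1.
  exact: reduces_to_marian (reduces_to_sym FBC) Csmall.
by case: acyclic; apply: reduces_to_has_cycle FBC wv Bbig Cbig.
Qed.
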